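(* Let $X$ and $Y$ be non-discrete Tychonoff spaces which both have $P$-number $\tau$, and suppose each of $X$ and $Y$ has a $\tau$-discrete basis of clopen sets (a base for the topology consisting of clopen sets that is a union of $\tau$ many discrete families). Then the $P$-number of $X\times Y$ is $\tau$, and $X\times Y$ has a $\tau$-discrete basis of clopen sets.
   Context: All spaces are Tychonoff. The $P$-number of a space $Z$ is $|Z|$ if $Z$ is discrete; otherwise it is the largest cardinal $\tau$ such that the intersection of any family of fewer than $\tau$ open subsets of $Z$ is open. A family of subsets of $Z$ is discrete if every point of $Z$ has a neighborhood meeting at most one member of the family. A $\tau$-discrete basis is a base of the form $\bigcup_{\alpha<\tau}\mathcal B_\alpha$ with each $\mathcal B_\alpha$ a discrete family. *)

From mathcomp Require Import all_boot all_algebra.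
From mathcomp Require Import all_classical all_reals all_analysis.
Set Implicit Arguments. Unset Strict Implicit. Unset Printing Implicit Defensive.
Local Open Scope classical_set_scope.

Definition tychonoff_space (T : topologicalType) : Prop :=
  completely_regular_space T /\ accessible_space T.

Definition discrete_top (T : topologicalType) : Prop :=
  forall x : T, open [set x].

Definition card_lt T U (A : set T) (B : set U) : Prop :=
  (A #<= B)%card /\ ~ (B #<= A)%card.

Definition inter_lt_open (Z : topologicalType) (K : Type) : Prop :=
  forall F : set (set Z), card_lt F [set: K] ->
    (forall A, F A -> open A) -> open (\bigcap_(A in F) A).

Definition pnumber_is (Z : topologicalType) (Tau : Type) : Prop :=
  (discrete_top Z /\ ([set: Z] #= [set: Tau])%card) \/
  (~ discrete_top Z /\ inter_lt_open Z Tau /\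
     forall K : Type, inter_lt_open Z K -> ([set: K] #<= [set: Tau])%card).

Definition discrete_family (Z : topologicalType) (F : set (set Z)) : Prop :=
  forall z : Z, exists N, nbhs z N /\
    forall A B, F A -> F B -> N `&` A !=set0 -> N `&` B !=set0 -> A = B.

Definition is_base (Z : topologicalType) (B : set (set Z)) : Prop :=
  (forall A, B A -> open A) /\
  forall (U : set Z) (x : Z), open U -> U x -> exists A, [/\ B A, A x & A `<=` U].

Definition tau_discrete_clopen_base (Z : topologicalType) (Tau : Type) : Prop :=
  exists Bs : Tau -> set (set Z),
    [/\ forall a, discrete_family (Bs a),
        forall a A, Bs a A -> clopen A &
        is_base (\bigcup_(a in [set: Tau]) Bs a)].

From mathcomp Require Import all_boot all_algebra.
From mathcomp Require Import all_classical all_reals all_analysis.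
From mathcomp Require wochoice.
Set Implicit Arguments. Unset Strict Implicit. Unset Printing Implicit Defensive.
Local Open Scope classical_set_scope.
Local Open Scope card_scope.

(* An intersection of fewer than tau open sets of X * Y contains, around each of
   its points, the product of two intersections of fewer than tau open sets of
   X and Y; this gives the P-number. For the base, cover all pairs of indices
   by tau sets [S c] of size < tau (initial segments of a suitable well-order).
   Points of X lying in the same members of the basic families indexed by
   [S c] form a partition into clopen sets, because an intersection of fewer
   than tau clopen sets is open; the products of the partitions of X and Y
   with the same index c are discrete clopen families, and together they form
   a base of X * Y. *)

Lemma card_le_inj T U (A : set T) (B : set U) (f : T -> U) :
  {in A &, injective f} -> f @` A `<=` B -> A #<= B.
Proof.
move=> finj fAB; apply: card_le_trans (subset_card_le fAB).
by have := inj_card_eq finj; rewrite card_eq_le => /andP[].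
Qed.

Lemma card_lt_image T U V (f : T -> U) (F : set T) (K : set V) :
  card_lt F K -> card_lt (f @` F) K.
Proof.
move=> [FK nKF]; split; first exact: card_le_trans (card_image_le f F) FK.
by move=> KfF; apply: nKF; apply: card_le_trans KfF (card_image_le f F).
Qed.

Lemma infinite_setU1_card_le (T : pointedType) (S : set T) (c : T) :
  infinite_set S -> S `|` [set c] #<= S.
Proof.
move=> /infiniteP/pcard_leP/injfunPex[g gS ginj].
have {}ginj : injective g by move=> m n; apply: ginj; rewrite inE.
pose ginv y := xget 0%N [set n | g n = y].
have ginvK n : ginv (g n) = n by apply: xget_unique => // m /ginj.
(* shift the copy [range g] of nat one step to make room for [c] *)
pose h x := if `[< x = c >] then g 0%N
            else if `[< range g x >] then g (ginv x).+1 else x.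
pose k y := if `[< range g y >] then
              (if ginv y is n.+1 then g n else c) else y.
apply: (card_le_inj (f := h)).
  apply: (@can_in_inj _ _ _ _ k) => x; rewrite inE /h /k.
  have [-> _|xc] := asboolP (x = c); first by rewrite asboolT ?ginvK //; exists 0%N.
  have [[n _ <-] _|nrx] := asboolP (range g x).
    by rewrite asboolT ?ginvK //; exists n.+1.
  by rewrite asboolF.
move=> _ [x Sx <-]; rewrite /h.
have [_|xc] := asboolP (x = c); first exact: gS.
have [_|_] := asboolP (range g x); first exact: gS.
by case: Sx.
Qed.

Definition small_pair_cover (T : Type) (S : T -> set T) : Prop :=
  (forall c, card_lt (S c) [set: T]) /\ (forall a b, exists c, S c a /\ S c b).

Lemma exists_inj_small_segments (T : pointedType) (R : rel T) :
  wochoice.well_order R -> infinite_set [set: T] ->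
  exists i : T -> T, injective i /\ forall c, ~ ([set: T] #<= [set d | R d (i c)]).
Proof.
move=> Rwo Tinf.
pose big c := [set: T] #<= [set d | R d c].
have [small|/existsNP[c1 /contrapT bc1]] := pselect (forall c, ~ big c).
  by exists id; split.
have [|c0 [[bc0 c0min] _]] := Rwo [pred c | big c]; first by exists c1.
have {}bc0 : big c0 := bc0.
(* [c0] is the least point with a segment as large as [T]; the points below it
   form a set [S0] of size |T| all of whose segments are small. *)
pose S0 := [set d | R d c0 /\ d <> c0].
have TS0c0 : [set: T] #<= S0 `|` [set c0].
  apply: card_le_trans bc0 (subset_card_le _) => d /= Rdc0.
  by have [->|dc0] := pselect (d = c0); [right|left].
have S0inf : infinite_set S0.
  move=> finS0; apply: Tinf; apply: card_le_finite TS0c0 _.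
  by rewrite finite_setU; split => //; exact: finite_set1.
have /pcard_leP/injfunPex[i iS iinj] :=
  card_le_trans TS0c0 (infinite_setU1_card_le c0 S0inf).
exists i; split; first by move=> x y; apply: iinj; rewrite inE.
move=> c bic; have [Ric0 nic0] := iS c I; apply: nic0.
apply: (wochoice.wo_chain_antisymmetric (wochoice.withinW (A := predT) Rwo)) => //.
by rewrite Ric0 (c0min (i c) bic).
Qed.

Lemma exists_small_pair_cover (T : Type) :
  infinite_set [set: T] -> exists S : T -> set T, small_pair_cover S.
Proof.
elim/Ppointed: T => T; first by move=> /infinite_setN0[x _]; case: (no x).
move=> Tinf; have [R Rwo] := wochoice.well_ordering_principle T.
have [i [iinj ismall]] := exists_inj_small_segments Rwo Tinf.
have Rchain := wochoice.withinW (A := predT) Rwo.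
have Rrefl := wochoice.wo_chain_reflexive Rchain.
exists (fun c => i @^-1` [set d | R d (i c)]); split.
  move=> c; split; first exact: card_leT.
  by move=> /card_le_trans/(_ (card_ge_preimage (in2W iinj)))/ismall.
have Rtot : total R by move=> x y; exact: (wochoice.wo_chainW Rchain).
move=> a b; have /orP[] := Rtot (i a) (i b) => ?.
  by exists b; rewrite /= Rrefl.
by exists a; rewrite /= Rrefl.
Qed.

Definition same_members (Z : Type) (F : set (set Z)) (x z : Z) : Prop :=
  forall A, F A -> (A x <-> A z).

Lemma same_members_refl (Z : Type) (F : set (set Z)) (x : Z) : same_members F x x.
Proof. by []. Qed.

Lemma same_members_sym (Z : Type) (F : set (set Z)) (x y : Z) :
  same_members F x y -> same_members F y x.
Proof. by move=> xy A FA; rewrite (xy A FA). Qed.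

Lemma same_members_trans (Z : Type) (F : set (set Z)) (x y z : Z) :
  same_members F x y -> same_members F y z -> same_members F x z.
Proof. by move=> xy yz A FA; rewrite (xy A FA); apply: yz. Qed.

Section OpenEquivalence.
Variables (Z : topologicalType) (E : Z -> Z -> Prop).
Hypotheses (E_refl : forall x, E x x) (E_sym : forall x y, E x y -> E y x).
Hypotheses (E_trans : forall x y z, E x y -> E y z -> E x z).
Hypothesis E_open : forall x, open [set z | E x z].

Let nbhs_class x : nbhs x [set z | E x z].
Proof. by apply: open_nbhs_nbhs; split. Qed.

Let class_eq x y : E x y -> [set z | E x z] = [set z | E y z].
Proof.
by move=> xy; apply/seteqP; split=> z; [apply: E_trans; apply: E_sym|apply: E_trans].
Qed.

Lemma discrete_family_classes : discrete_family [set [set z | E x z] | x in [set: Z]].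
Proof.
move=> z; exists [set w | E z w]; split; first exact: nbhs_class.
move=> _ _ [a _ <-] [b _ <-] [w [zw aw]] [v [zv bv]].
by rewrite (class_eq (E_trans aw (E_sym zw))) (class_eq (E_trans bv (E_sym zv))).
Qed.

Lemma clopen_class x : clopen [set z | E x z].
Proof.
split=> //; rewrite -openC openE => w nxw.
by apply: filterS (nbhs_class w) => v wv xv; apply: nxw; apply: E_trans xv (E_sym wv).
Qed.

End OpenEquivalence.

Lemma nbhs_same_members (Z : topologicalType) (F : set (set Z)) (z : Z) :
  discrete_family F -> (forall A, F A -> clopen A) ->
  nbhs z [set w | same_members F z w].
Proof.
move=> dF cF; have [N [Nz N1]] := dF z.
suff [M [Mz MF]] : exists M, nbhs z M /\
    forall w, M w -> forall A, F A -> N `&` A !=set0 -> (A z <-> A w).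
  apply: filterS (filterI Nz Mz) => w [Nw Mw] A FA.
  have [NA|nNA] := pselect (N `&` A !=set0); first exact: MF.
  by split=> ?; case: nNA; [exists z; split=> //; apply: nbhs_singleton|exists w].
have [[A1 FA1 NA1]|nNF] := pselect (exists2 A1, F A1 & N `&` A1 !=set0); last first.
  by exists setT; split=> [|w _ A FA NA]; [exact: filterT|case: nNF; exists A].
have [oA1 cA1] := cF A1 FA1.
have [A1z|nA1z] := pselect (A1 z).
  exists A1; split; first by apply: open_nbhs_nbhs; split.
  by move=> w A1w A FA NA; rewrite (N1 A A1 FA FA1 NA NA1).
exists (~` A1); split; first by apply: open_nbhs_nbhs; split; rewrite ?openC.
by move=> w nA1w A FA NA; rewrite (N1 A A1 FA FA1 NA NA1).
Qed.

Lemma open_same_members (Z : topologicalType) (F : set (set Z)) (x : Z) :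
  discrete_family F -> (forall A, F A -> clopen A) ->
  open [set z | same_members F x z].
Proof.
move=> dF cF; rewrite openE => z xz.
by apply: filterS (nbhs_same_members z dF cF) => w; apply: same_members_trans.
Qed.

Lemma open_same_members_bigcup (Z : topologicalType) (I : Type)
    (Bs : I -> set (set Z)) (S : set I) (x : Z) :
  inter_lt_open Z I -> card_lt S [set: I] ->
  (forall a, discrete_family (Bs a)) -> (forall a A, Bs a A -> clopen A) ->
  open [set z | same_members (\bigcup_(a in S) Bs a) x z].
Proof.
move=> intZ Ssmall dBs cBs.
have -> : [set z | same_members (\bigcup_(a in S) Bs a) x z] =
    \bigcap_(C in [set [set z | same_members (Bs a) x z] | a in S]) C.
  apply/seteqP; split=> z.
    by move=> xz _ [a Sa <-] A BaA; apply: xz; exists a.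
  by move=> xz A [a Sa BaA]; exact: (xz _ (ex_intro2 _ _ a Sa erefl)).
apply: intZ => [|_ [a _ <-]]; first exact: card_lt_image.
exact: open_same_members (dBs a) (@cBs a).
Qed.

Lemma open_setX (X Y : topologicalType) (A : set X) (B : set Y) :
  open A -> open B -> open (A `*` B).
Proof.
move=> oA oB; rewrite openE => -[x y] [/= Ax By].
by exists (A, B) => //; split; apply: open_nbhs_nbhs.
Qed.

Lemma open_section (X Y : topologicalType) (W : set (X * Y)) (y : Y) :
  open W -> open [set x | W (x, y)].
Proof.
move=> oW; rewrite openE => x Wxy.
have [[U V] [/= nU nV] UVW] : nbhs (x, y) W by apply: open_nbhs_nbhs.
by apply: filterS nU => u Uu; apply: UVW; split=> //; apply: nbhs_singleton.
Qed.

Lemma discrete_top_setX_l (X Y : topologicalType) (y : Y) :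
  discrete_top (X * Y)%type -> discrete_top X.
Proof.
move=> dXY x; have -> : [set x] = [set u | [set (x, y)] (u, y)].
  by apply/seteqP; split=> u /=; [move->|case].
exact: open_section.
Qed.

Lemma inter_lt_open_setX_l (X Y : topologicalType) (K : Type) (y : Y) :
  inter_lt_open (X * Y)%type K -> inter_lt_open X K.
Proof.
move=> intXY F FK Fo.
have -> : \bigcap_(A in F) A =
    [set x | (\bigcap_(C in [set A `*` [set: Y] | A in F]) C) (x, y)].
  apply/seteqP; split=> x /= Fx.
    by move=> _ [A FA <-]; split=> //; apply: Fx.
  by move=> A FA; have [] := Fx (A `*` [set: Y]) (ex_intro2 _ _ A FA erefl).
apply: open_section; apply: intXY => [|_ [A FA <-]]; first exact: card_lt_image.
by apply: open_setX; [exact: Fo|exact: openT].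
Qed.

Lemma inter_lt_open_setX (X Y : topologicalType) (K : Type) :
  inter_lt_open X K -> inter_lt_open Y K -> inter_lt_open (X * Y)%type K.
Proof.
move=> intX intY F FK Fo; rewrite openE => p Fp.
have /choice[g gW] : forall W, exists UV : set X * set Y, F W ->
    [/\ open UV.1, open UV.2, UV.1 p.1, UV.2 p.2 & UV.1 `*` UV.2 `<=` W].
  move=> W; have [FW|nFW] := pselect (F W); last by exists (setT, setT).
  have [[U V] [/= nU nV] UVW] : nbhs p W.
    by apply: open_nbhs_nbhs; split; [exact: Fo|exact: Fp].
  exists (U°, V°) => _; split=> //=; try exact: open_interior.
  by move=> q [/interior_subset Uq /interior_subset Vq]; apply: UVW.
pose FX := [set (g W).1 | W in F]; pose FY := [set (g W).2 | W in F].
have oFX : open (\bigcap_(A in FX) A).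
  by apply: intX => [|_ [W FW <-]]; [exact: card_lt_image|case: (gW W FW)].
have oFY : open (\bigcap_(B in FY) B).
  by apply: intY => [|_ [W FW <-]]; [exact: card_lt_image|case: (gW W FW)].
apply: (@filterS _ _ _ ((\bigcap_(A in FX) A) `*` (\bigcap_(B in FY) B))).
  move=> q [qX qY] W FW; have [_ _ _ _] := gW W FW; apply.
  by split; [apply: qX|apply: qY]; exists W.
apply: open_nbhs_nbhs; split; first exact: open_setX.
by split=> _ [W FW <-]; case: (gW W FW).
Qed.

Lemma inter_lt_open_nat (Z : topologicalType) : inter_lt_open Z nat.
Proof.
move=> F [_ nF] Fo; have finF : finite_set F by apply/finite_setPn.
rewrite -(fset_setK finF) openE => x Fx; apply: filter_bigI => A FA.
apply: open_nbhs_nbhs; split; last exact: Fx.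
by apply: Fo; move: FA; rewrite in_fset_set // inE.
Qed.

Lemma pnumber_is_setX (X Y : topologicalType) (Tau : Type) :
  ~ discrete_top X -> ~ discrete_top Y ->
  pnumber_is X Tau -> pnumber_is Y Tau -> pnumber_is (X * Y)%type Tau.
Proof.
move=> ndX ndY [[/ndX]//|[_ [intX maxX]]] [[/ndY]//|[_ [intY _]]].
have [y _] : exists y : Y, True.
  by apply: contrapT => nY; apply: ndY => y; case: nY; exists y.
right; split; [|split].
- by move/(discrete_top_setX_l y).
- exact: inter_lt_open_setX.
- by move=> K /(inter_lt_open_setX_l y)/maxX.
Qed.

Lemma tau_discrete_clopen_base_setX (X Y : topologicalType) (Tau : Type) :
  infinite_set [set: Tau] -> inter_lt_open X Tau -> inter_lt_open Y Tau ->
  tau_discrete_clopen_base X Tau -> tau_discrete_clopen_base Y Tau ->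
  tau_discrete_clopen_base (X * Y)%type Tau.
Proof.
move=> Tinf intX intY [BX [dBX cBX [_ bBX]]] [BY [dBY cBY [_ bBY]]].
have [S [Ssmall Spair]] := exists_small_pair_cover Tinf.
pose E c (p q : X * Y) := same_members (\bigcup_(a in S c) BX a) p.1 q.1 /\
                          same_members (\bigcup_(a in S c) BY a) p.2 q.2.
have E_refl c p : E c p p by split; apply: same_members_refl.
have E_sym c p q : E c p q -> E c q p by case; split; apply: same_members_sym.
have E_trans c p q r : E c p q -> E c q r -> E c p r.
  move=> [pq1 pq2] [qr1 qr2].
  by split; [apply: same_members_trans qr1|apply: same_members_trans qr2].
have E_open c p : open [set q | E c p q].
  exact: (open_setX (open_same_members_bigcup p.1 intX (Ssmall c) dBX cBX)
                    (open_same_members_bigcup p.2 intY (Ssmall c) dBY cBY)).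
exists (fun c => [set [set q | E c p q] | p in [set: X * Y]]); split.
- move=> c.
  exact: (@discrete_family_classes _ (E c) (E_refl c) (@E_sym c) (@E_trans c) (E_open c)).
- move=> c _ [p _ <-].
  exact: (@clopen_class _ (E c) (E_refl c) (@E_sym c) (@E_trans c) (E_open c)).
- split; first by move=> _ [c _ [p _ <-]].
  move=> W p oW Wp.
  have [[U V] [/= nU nV] UVW] : nbhs p W by apply: open_nbhs_nbhs.
  have [A [[a _ BXaA] Ap1 AU]] := bBX _ p.1 (@open_interior _ U) nU.
  have [B [[b _ BYbB] Bp2 BV]] := bBY _ p.2 (@open_interior _ V) nV.
  have [c [Sca Scb]] := Spair a b.
  exists [set q | E c p q]; split; [by exists c => //; exists p|exact: E_refl|].
  move=> q [pq1 pq2]; apply: UVW; split; apply: interior_subset.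
    by apply/AU/(pq1 A) => //; exists a.
  by apply/BV/(pq2 B) => //; exists b.
Qed.

Theorem lemma2p2 (X Y : topologicalType) (Tau : Type) :
  tychonoff_space X -> tychonoff_space Y ->
  ~ discrete_top X -> ~ discrete_top Y ->
  pnumber_is X Tau -> pnumber_is Y Tau ->
  tau_discrete_clopen_base X Tau -> tau_discrete_clopen_base Y Tau ->
  pnumber_is (X * Y)%type Tau /\ tau_discrete_clopen_base (X * Y)%type Tau.
Proof.
move=> _ _ ndX ndY pX pY bX bY; split; first exact: pnumber_is_setX.
have [[/ndX]//|[_ [intX maxX]]] := pX.
have [[/ndY]//|[_ [intY _]]] := pY.
have Tinf : infinite_set [set: Tau] by apply/infiniteP/maxX/inter_lt_open_nat.
exact: tau_discrete_clopen_base_setX.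
Qed.
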